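(* Let $m\ge1$ and $g_1,g_2\in\Gamma_{2m}(2)$. Suppose there exist $Z_1\in g_1\cdot iC_n$, $Z_2\in g_2\cdot iC_n$ and $\gamma\in\Gamma(4m)$ with $\gamma Z_1=Z_2$. Then there exists $\alpha\in\Gamma_\ell(2)$ such that $g_2=\gamma g_1\alpha$.
   Context: $\mathbf{Sp}(2n,\mathbb R)$: real matrices $g=\begin{pmatrix}A&B\\C&D\end{pmatrix}$ with ${}^tgJg=J$, $J=\begin{pmatrix}0&I\\-I&0\end{pmatrix}$, acting on $\mathfrak h_n=\{Z\in M_n(\mathbb C):{}^tZ=Z,\mathrm{Im}Z>0\}$ by $gZ=(AZ+B)(CZ+D)^{-1}$. $\Gamma(4m)=\{\gamma\in\mathbf{Sp}(2n,\mathbb Z):\gamma\equiv I\bmod4m\}$; $\Gamma_{2m}(2)=\{\begin{pmatrix}A&B\\C&D\end{pmatrix}\in\mathbf{Sp}(2n,\mathbb Z):A,D\equiv I\bmod2,\ B,C\equiv0\bmod2m\}$; $\Gamma_\ell(2)=\{U\in\mathbf{GL}(n,\mathbb Z):U\equiv I\bmod2\}$ embedded via $U\mapsto\mathrm{diag}(U,{}^tU^{-1})$. $C_n$: positive definite symmetric real $n\times n$ matrices; $iC_n=\{iY:Y\in C_n\}$. *)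

From HB Require Import structures.
From mathcomp Require Import all_boot all_order all_algebra.
From mathcomp Require Import reals complex.
Set Implicit Arguments. Unset Strict Implicit. Unset Printing Implicit Defensive.
Import Order.TTheory GRing.Theory Num.Theory.
Local Open Scope ring_scope.

Definition Jmx (T : pzRingType) (n : nat) : 'M[T]_(n + n) :=
  block_mx 0 1%:M (- 1%:M) 0.

Definition symplectic (T : pzRingType) (n : nat) (g : 'M[T]_(n + n)) : Prop :=
  g^T *m Jmx T n *m g = Jmx T n.

Definition mxcong (p q : nat) (k : int) (A B : 'M[int]_(p, q)) : Prop :=
  forall i j, (A i j = B i j %[mod k])%Z.

Definition SpZ (n : nat) (g : 'M[int]_(n + n)) : Prop := symplectic g.

Definition Gamma_princ (n m : nat) (g : 'M[int]_(n + n)) : Prop :=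
  SpZ g /\ mxcong (4 * m)%:Z g 1%:M.

Definition Gamma_2m_2 (n m : nat) (g : 'M[int]_(n + n)) : Prop :=
  [/\ SpZ g,
      mxcong 2 (ulsubmx g) 1%:M, mxcong 2 (drsubmx g) 1%:M,
      mxcong (2 * m)%:Z (ursubmx g) 0 & mxcong (2 * m)%:Z (dlsubmx g) 0].

Definition Gamma_l_2 (n : nat) (U : 'M[int]_n) : Prop :=
  U \in unitmx /\ mxcong 2 U 1%:M.

Definition embedGL (n : nat) (U : 'M[int]_n) : 'M[int]_(n + n) :=
  block_mx U 0 0 (invmx U^T).

(* C_n : positive definite symmetric real n x n matrices *)
Definition posdef (R : realType) (n : nat) (Y : 'M[R]_n) : Prop :=
  Y^T = Y /\ forall v : 'cV[R]_n, v != 0 -> 0 < (v^T *m Y *m v) 0 0.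

Definition cmx_of_int (R : realType) (p q : nat) (A : 'M[int]_(p, q))
  : 'M[R[i]]_(p, q) := map_mx (fun x : int => x%:~R) A.

Definition imx (R : realType) (n : nat) (Y : 'M[R]_n) : 'M[R[i]]_n :=
  map_mx (fun y : R => Complex 0 y) Y.

Definition sp_act (R : realType) (n : nat) (g : 'M[int]_(n + n))
    (Z : 'M[R[i]]_n) : 'M[R[i]]_n :=
  let gc := cmx_of_int R g in
  (ulsubmx gc *m Z + ursubmx gc) *m invmx (dlsubmx gc *m Z + drsubmx gc).

Definition in_orbit_iC (R : realType) (n : nat) (g : 'M[int]_(n + n))
    (Z : 'M[R[i]]_n) : Prop :=
  exists Y : 'M[R]_n, posdef Y /\ Z = sp_act g (imx Y).

(* Put h = g2^-1 gamma g1 = [[A, B], [C, D]]: it is an integral symplectic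
   matrix, h = 1 mod 2, and h maps iY1 to iY2, i.e. A iY1 + B = iY2 (C iY1 + D).
   Real and imaginary parts give B = -Y2 C Y1 and A Y1 = Y2 D.  Writing B = 2B'
   and C = 2C', the integral matrix K = -C'^T B' satisfies
   Y1 (4K) = (C Y1)^T Y2 (C Y1) and, by A^T D - C^T B = 1, Y1 (1 - 4K) = D^T Y2 D.
   Hence K is self-adjoint for the inner product <u, v> = u^T Y1 v and
   0 <= K <= 1/4, so |K^j w| <= 4^-j |w|.  Integral vectors of small norm vanish,
   so K is nilpotent, and a self-adjoint nilpotent matrix is 0.  Then C Y1 = 0,
   so C = B = 0 and h = diag(A, D) with A^T D = 1, i.e. h^-1 = embedGL D^T. *)

From HB Require Import structures.
From mathcomp Require Import all_boot all_order all_algebra.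
From mathcomp Require Import reals complex.
From mathcomp Require Import ring lra zify.
Set Implicit Arguments. Unset Strict Implicit. Unset Printing Implicit Defensive.
Import Order.TTheory GRing.Theory Num.Theory.
Local Open Scope ring_scope.

Notation rmx_of_int R A := (map_mx (fun x : int => (x%:~R : R)) A).
Notation mx_Fp p A := (map_mx (fun z : int => (z%:~R : 'F_p)) A).

Lemma rmx_of_int_eq0 (R : numDomainType) p q (A : 'M[int]_(p, q)) :
  rmx_of_int R A = 0 -> A = 0.
Proof.
move/matrixP => A0; apply/matrixP => i j.
by move/eqP: (A0 i j); rewrite !mxE intr_eq0 => /eqP.
Qed.

Lemma kernel_trivial_unitmx (F : fieldType) n (E : 'M[F]_n) :
  (forall v : 'cV[F]_n, E *m v = 0 -> v = 0) -> E \in unitmx.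
Proof.
move=> Ev0; rewrite -unitmx_tr -row_free_unit -kermx_eq0; apply/eqP/row_matrixP => i.
rewrite row0; apply: trmx_inj; rewrite trmx0; apply: Ev0.
by rewrite -[E in E *m _]trmxK -trmx_mul -row_mul mulmx_ker row0 trmx0.
Qed.

Lemma mulmx_delta_eq0 (T : pzRingType) m n (A : 'M[T]_(m, n)) :
  (forall j, A *m (delta_mx j 0 : 'cV_n) = 0) -> A = 0.
Proof.
move=> A0; apply/matrixP => i j; have := congr1 (fun M : 'cV_m => M i 0) (A0 j).
by rewrite /= -colE !mxE.
Qed.

Lemma trmx_conj_sym (T : comPzRingType) p n (X : 'M[T]_(p, n)) (Y : 'M[T]_p) :
  Y^T = Y -> (X^T *m Y *m X)^T = X^T *m Y *m X.
Proof. by move=> sY; rewrite !trmx_mul trmxK sY mulmxA. Qed.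

Section RealImaginaryParts.
Variable R : realType.

Definition mxRe p q (M : 'M[R[i]]_(p, q)) : 'M[R]_(p, q) := map_mx (@complex.Re R) M.
Definition mxIm p q (M : 'M[R[i]]_(p, q)) : 'M[R]_(p, q) := map_mx (@complex.Im R) M.

Lemma mxReIm_inj p q (M N : 'M[R[i]]_(p, q)) :
  mxRe M = mxRe N -> mxIm M = mxIm N -> M = N.
Proof.
move=> /matrixP eRe /matrixP eIm; apply/matrixP => i j.
move: (eRe i j) (eIm i j); rewrite !mxE.
by case: (M i j) => a b; case: (N i j) => c d /= -> ->.
Qed.

Lemma mxRe0 p q : mxRe (0 : 'M[R[i]]_(p, q)) = 0.
Proof. by apply/matrixP => i j; rewrite !mxE. Qed.

Lemma mxIm0 p q : mxIm (0 : 'M[R[i]]_(p, q)) = 0.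
Proof. by apply/matrixP => i j; rewrite !mxE. Qed.

Lemma mxReD p q (M N : 'M[R[i]]_(p, q)) : mxRe (M + N) = mxRe M + mxRe N.
Proof. by apply/matrixP => i j; rewrite !mxE; case: (M i j); case: (N i j). Qed.

Lemma mxImD p q (M N : 'M[R[i]]_(p, q)) : mxIm (M + N) = mxIm M + mxIm N.
Proof. by apply/matrixP => i j; rewrite !mxE; case: (M i j); case: (N i j). Qed.

Lemma Re_sum I (r : seq I) (P : pred I) (F : I -> R[i]) :
  complex.Re (\sum_(i <- r | P i) F i) = \sum_(i <- r | P i) complex.Re (F i).
Proof. by apply: (big_morph (@complex.Re R)) => // [[a b] [c d]]. Qed.

Lemma Im_sum I (r : seq I) (P : pred I) (F : I -> R[i]) :
  complex.Im (\sum_(i <- r | P i) F i) = \sum_(i <- r | P i) complex.Im (F i).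
Proof. by apply: (big_morph (@complex.Im R)) => // [[a b] [c d]]. Qed.

Lemma mxRe_mul p q r (M : 'M[R[i]]_(p, q)) (N : 'M[R[i]]_(q, r)) :
  mxRe (M *m N) = mxRe M *m mxRe N - mxIm M *m mxIm N.
Proof.
apply/matrixP => i j; rewrite !mxE Re_sum -sumrB.
by apply: eq_bigr => k _; rewrite !mxE; case: (M i k) => a b; case: (N k j).
Qed.

Lemma mxIm_mul p q r (M : 'M[R[i]]_(p, q)) (N : 'M[R[i]]_(q, r)) :
  mxIm (M *m N) = mxRe M *m mxIm N + mxIm M *m mxRe N.
Proof.
apply/matrixP => i j; rewrite !mxE Im_sum -big_split.
by apply: eq_bigr => k _; rewrite !mxE; case: (M i k) => a b; case: (N k j).
Qed.

Lemma mxRe_cmx p q (A : 'M[int]_(p, q)) : mxRe (cmx_of_int R A) = rmx_of_int R A.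
Proof. by apply/matrixP => i j; rewrite !mxE -(rmorph_int (real_complex R)). Qed.

Lemma mxIm_cmx p q (A : 'M[int]_(p, q)) : mxIm (cmx_of_int R A) = 0.
Proof. by apply/matrixP => i j; rewrite !mxE -(rmorph_int (real_complex R)). Qed.

Lemma mxRe_imx n (Y : 'M[R]_n) : mxRe (imx Y) = 0.
Proof. by apply/matrixP => i j; rewrite !mxE. Qed.

Lemma mxIm_imx n (Y : 'M[R]_n) : mxIm (imx Y) = Y.
Proof. by apply/matrixP => i j; rewrite !mxE. Qed.

Lemma mxRe_imx_mul n k (Y : 'M[R]_n) (M : 'M[R[i]]_(n, k)) :
  mxRe (imx Y *m M) = - (Y *m mxIm M).
Proof. by rewrite mxRe_mul mxRe_imx mxIm_imx mul0mx sub0r. Qed.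

Lemma mxIm_imx_mul n k (Y : 'M[R]_n) (M : 'M[R[i]]_(n, k)) :
  mxIm (imx Y *m M) = Y *m mxRe M.
Proof. by rewrite mxIm_mul mxRe_imx mxIm_imx mul0mx add0r. Qed.

Lemma mxRe_affine p n (C D : 'M[int]_(p, n)) (Y : 'M[R]_n) :
  mxRe (cmx_of_int R C *m imx Y + cmx_of_int R D) = rmx_of_int R D.
Proof.
by rewrite mxReD mxRe_mul !mxRe_cmx mxIm_cmx mxRe_imx mulmx0 mul0mx subr0 add0r.
Qed.

Lemma mxIm_affine p n (C D : 'M[int]_(p, n)) (Y : 'M[R]_n) :
  mxIm (cmx_of_int R C *m imx Y + cmx_of_int R D) = rmx_of_int R C *m Y.
Proof.
by rewrite mxImD mxIm_mul mxRe_cmx !mxIm_cmx mxIm_imx mul0mx !addr0.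
Qed.

End RealImaginaryParts.

Section HomogeneousAction.
Variables (T : comUnitRingType) (n : nat).
Implicit Types (G H : 'M[T]_(n + n)) (W V : 'M[T]_n).

Definition mxtop G W := ulsubmx G *m W + ursubmx G.
Definition mxbot G W := dlsubmx G *m W + drsubmx G.
Definition mxact G W := mxtop G W *m invmx (mxbot G W).

Lemma mul_col_mx1 G W : G *m col_mx W 1%:M = col_mx (mxtop G W) (mxbot G W).
Proof. by rewrite -{1}[G]submxK mul_block_col !mulmx1. Qed.

Lemma mxact_homogeneous G W : mxbot G W \in unitmx ->
  G *m col_mx W 1%:M = col_mx (mxact G W) 1%:M *m mxbot G W.
Proof. by move=> hGW; rewrite mul_col_mx1 mul_col_mx mul1mx mulmxKV. Qed.

Lemma mxbot_mul G H W : mxbot H W \in unitmx ->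
  mxbot (G *m H) W = mxbot G (mxact H W) *m mxbot H W.
Proof.
move=> hHW; have e : G *m H *m col_mx W 1%:M = G *m (H *m col_mx W 1%:M).
  by rewrite mulmxA.
rewrite (mxact_homogeneous hHW) mulmxA !mul_col_mx1 mul_col_mx in e.
by case/eq_col_mx: e.
Qed.

Lemma mxact_eq_homogeneous G H W V :
  mxbot G W \in unitmx -> mxbot H V \in unitmx -> mxact G W = mxact H V ->
  G *m col_mx W 1%:M = H *m col_mx V 1%:M *m (invmx (mxbot H V) *m mxbot G W).
Proof.
move=> hGW hHV e.
by rewrite !mxact_homogeneous // e mulmxA mulmxK.
Qed.

Lemma mxtop_eq_mul_bot G W V (M : 'M[T]_n) :
  G *m col_mx W 1%:M = col_mx V 1%:M *m M -> mxtop G W = V *m mxbot G W.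
Proof. by rewrite mul_col_mx1 mul_col_mx mul1mx => /eq_col_mx[-> ->]. Qed.

Lemma mxact_transport (G1 G G2 G2' : 'M[T]_(n + n)) W V :
  G2' *m G2 = 1%:M ->
  mxbot G1 W \in unitmx -> mxbot (G *m G1) W \in unitmx -> mxbot G2 V \in unitmx ->
  mxact G (mxact G1 W) = mxact G2 V ->
  mxtop (G2' *m (G *m G1)) W = V *m mxbot (G2' *m (G *m G1)) W.
Proof.
move=> hG2' h1 h21 h2 e.
have hG : mxbot G (mxact G1 W) \in unitmx.
  by move: h21; rewrite mxbot_mul // unitmx_mul => /andP[].
apply: mxtop_eq_mul_bot.
rewrite -!mulmxA (mxact_homogeneous h1) (mulmxA G) (mxact_eq_homogeneous hG h2 e).
by rewrite !mulmxA hG2' mul1mx -!mulmxA.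
Qed.

End HomogeneousAction.

Section Symplectic.
Variables (T : comPzRingType) (n : nat).
Implicit Types g h : 'M[T]_(n + n).
Local Notation J := (Jmx T n).

Lemma Jmx_sqr : J *m J = - 1%:M.
Proof.
rewrite /Jmx mulmx_block !mulmx0 !mul0mx !mulmx1 !mulmxN !mulmx1 !addr0 !add0r.
by rewrite scalar_mx_block opp_block_mx !oppr0.
Qed.

Lemma Jmx_form (u1 d1 u2 d2 : 'cV[T]_n) :
  (col_mx u1 d1)^T *m J *m col_mx u2 d2 = u1^T *m d2 - d1^T *m u2.
Proof.
rewrite /Jmx tr_col_mx mul_row_block mul_row_col.
by rewrite !mulmx0 !addr0 !add0r mulmxN !mulmx1 mulNmx addrC.
Qed.

Definition sp_inv g := - (J *m g^T *m J).

Lemma sp_invK g : symplectic g -> sp_inv g *m g = 1%:M.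
Proof. by move=> sg; rewrite /sp_inv mulNmx -!mulmxA [g^T *m _]mulmxA sg Jmx_sqr opprK. Qed.

Lemma sp_invKV g : symplectic g -> g *m sp_inv g = 1%:M.
Proof. by move=> sg; apply: mulmx1C; apply: sp_invK. Qed.

Lemma symplecticM g h : symplectic g -> symplectic h -> symplectic (g *m h).
Proof.
rewrite /symplectic => sg sh.
have -> : (g *m h)^T *m J *m (g *m h) = h^T *m (g^T *m J *m g) *m h.
  by rewrite trmx_mul !mulmxA.
by rewrite sg.
Qed.

Lemma symplectic_sp_inv g : symplectic g -> symplectic (sp_inv g).
Proof.
move=> sg; rewrite /symplectic.
have -> : (sp_inv g)^T *m J *m sp_inv g = (g *m sp_inv g)^T *m J *m (g *m sp_inv g).
  by rewrite trmx_mul -{1}sg !mulmxA.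
by rewrite sp_invKV // trmx1 mul1mx mulmx1.
Qed.

Lemma symplectic_blocks g : symplectic g ->
  (ulsubmx g)^T *m drsubmx g - (dlsubmx g)^T *m ursubmx g = 1%:M.
Proof.
move=> /(congr1 (@ursubmx _ n n n n)).
rewrite -{1 2}[g]submxK tr_block_mx /Jmx !mulmx_block !block_mxKur.
by rewrite !mulmx0 !addr0 !add0r mulmxN !mulmx1 mulNmx addrC.
Qed.

Lemma dsubmx_mul_col g (u d : 'cV[T]_n) :
  dsubmx (g *m col_mx u d) = dlsubmx g *m u + drsubmx g *m d.
Proof. by rewrite -{1}[g]submxK mul_block_col col_mxKd. Qed.

Lemma symplectic_isotropic g (x y : 'cV[T]_(n + n)) : symplectic g ->
  dsubmx (g *m x) = 0 -> dsubmx (g *m y) = 0 -> x^T *m J *m y = 0.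
Proof.
move=> sg gx0 gy0.
have -> : x^T *m J *m y = (g *m x)^T *m J *m (g *m y) by rewrite -{1}sg trmx_mul !mulmxA.
by rewrite -[g *m x]vsubmxK -[g *m y]vsubmxK gx0 gy0 Jmx_form trmx0 mulmx0 mul0mx subr0.
Qed.

Lemma symplectic_map (S : comPzRingType) (f : {rmorphism T -> S}) g :
  symplectic g -> symplectic (map_mx f g).
Proof.
rewrite /symplectic => sg.
have fJ : map_mx f J = Jmx S n by rewrite map_block_mx map_mx0 map_mxN map_mx1.
by rewrite -fJ map_trmx -!map_mxM sg.
Qed.

End Symplectic.

Section Reduction.
Variable p : nat.
Hypothesis p_pr : prime p.

Lemma eqz_mod_Fp (a b : int) : (a = b %[mod p])%Z <-> (a%:~R = b%:~R :> 'F_p).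
Proof.
have pchar_p : p \in [pchar 'F_p] := pchar_Fp p_pr.
split=> [/eqP | eab]; first by rewrite eqz_mod_dvd (dvdz_pcharf pchar_p) intrB subr_eq0 => /eqP.
by apply/eqP; rewrite eqz_mod_dvd (dvdz_pcharf pchar_p) intrB eab subrr.
Qed.

Lemma mxcong_FpP r c (A B : 'M[int]_(r, c)) : mxcong p A B <-> mx_Fp p A = mx_Fp p B.
Proof.
split=> [eAB | /matrixP eAB i j]; last by apply/eqz_mod_Fp; move: (eAB i j); rewrite !mxE.
by apply/matrixP => i j; rewrite !mxE; apply/eqz_mod_Fp.
Qed.

End Reduction.

Lemma mxcong2P r c (A B : 'M[int]_(r, c)) : mxcong 2 A B <-> mx_Fp 2 A = mx_Fp 2 B.
Proof. exact: mxcong_FpP. Qed.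

Lemma mxcong_dvd r c (d k : int) (A B : 'M[int]_(r, c)) :
  (d %| k)%Z -> mxcong k A B -> mxcong d A B.
Proof.
move=> dk eAB i j; move/eqP: (eAB i j); rewrite !eqz_mod_dvd => kAB.
by apply/eqP; rewrite eqz_mod_dvd (dvdz_trans dk).
Qed.

Lemma mxcong0_scale r c (k : int) (A : 'M[int]_(r, c)) :
  mxcong k A 0 -> exists A' : 'M[int]_(r, c), A = k *: A'.
Proof.
move=> Ak0; exists (map_mx (fun z => (z %/ k)%Z) A); apply/matrixP => i j.
move: (Ak0 i j) => /eqP; rewrite eqz_mod_dvd !mxE subr0 => /divzK.
by move=> {1}<-; rewrite mulrC.
Qed.

Lemma Gamma_2m_2_mod2 n m (g : 'M[int]_(n + n)) : Gamma_2m_2 m g -> mx_Fp 2 g = 1%:M.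
Proof.
have dvd2 : (2 %| (2 * m)%N%:Z)%Z by rewrite PoszM dvdz_mulr.
case=> _ /mxcong2P eA /mxcong2P eD.
move=> /(mxcong_dvd dvd2) /mxcong2P eB.
move=> /(mxcong_dvd dvd2) /mxcong2P eC.
rewrite -[g]submxK map_block_mx.
by rewrite eA eD eB eC !map_mx1 !map_mx0 -scalar_mx_block.
Qed.

Lemma Gamma_princ_mod2 n m (g : 'M[int]_(n + n)) : Gamma_princ m g -> mx_Fp 2 g = 1%:M.
Proof.
have dvd2 : (2 %| (4 * m)%N%:Z)%Z by rewrite PoszM dvdz_mulr.
by case=> _ /(mxcong_dvd dvd2) /mxcong2P ->; rewrite map_mx1.
Qed.

Lemma mod2_blocks n (h : 'M[int]_(n + n)) : mx_Fp 2 h = 1%:M ->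
  [/\ mxcong 2 (ursubmx h) 0, mxcong 2 (dlsubmx h) 0 & mxcong 2 (drsubmx h) 1%:M].
Proof.
rewrite [1%:M]scalar_mx_block => h1.
split; apply/mxcong2P.
- by rewrite map_ursubmx h1 block_mxKur map_mx0.
- by rewrite map_dlsubmx h1 block_mxKdl map_mx0.
- by rewrite map_drsubmx h1 block_mxKdr map_mx1.
Qed.

Section PositiveForms.
Variables (R : realType) (n : nat).
Implicit Types (Y S K : 'M[R]_n) (u v w : 'cV[R]_n).

Definition mxform Y u v := (u^T *m Y *m v) 0 0.

Lemma mxform_sym Y u v : Y^T = Y -> mxform Y u v = mxform Y v u.
Proof.
move=> sY; rewrite /mxform -[in LHS](trmxK (u^T *m Y *m v)) [in LHS]mxE.
by rewrite !trmx_mul trmxK sY mulmxA.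
Qed.

Lemma mxformDl Y u v w : mxform Y (u + v) w = mxform Y u w + mxform Y v w.
Proof. by rewrite /mxform linearD /= !mulmxDl mxE. Qed.

Lemma mxformDr Y u v w : mxform Y u (v + w) = mxform Y u v + mxform Y u w.
Proof. by rewrite /mxform mulmxDr mxE. Qed.

Lemma mxformZl Y (c : R) u v : mxform Y (c *: u) v = c * mxform Y u v.
Proof. by rewrite /mxform linearZ /= -!scalemxAl mxE. Qed.

Lemma mxformZr Y (c : R) u v : mxform Y u (c *: v) = c * mxform Y u v.
Proof. by rewrite /mxform -scalemxAr mxE. Qed.

Lemma mxformMr Y K u v : mxform Y u (K *m v) = mxform (Y *m K) u v.
Proof. by rewrite /mxform !mulmxA. Qed.

Lemma mxform_adj Y K u v : K^T *m Y = Y *m K -> mxform Y (K *m u) v = mxform Y u (K *m v).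
Proof. by move=> adjK; rewrite /mxform trmx_mul -(mulmxA u^T K^T) adjK !mulmxA. Qed.

Lemma mxform_CauchySchwarz S u v : S^T = S -> (forall w, 0 <= mxform S w w) ->
  mxform S u v ^+ 2 <= mxform S u u * mxform S v v.
Proof.
move=> sS S_ge0; set a := mxform S u u; set b := mxform S u v; set c := mxform S v v.
have quad x y : 0 <= x ^+ 2 * a + 2 * x * y * b + y ^+ 2 * c.
  have := S_ge0 (x *: u + y *: v).
  rewrite !mxformDl !mxformDr !mxformZl !mxformZr (mxform_sym v u sS) -/a -/b -/c.
  by congr (_ <= _); ring.
have := quad c (- b); have := quad b (- a); have := quad 1 (- b).
have := S_ge0 u; have := S_ge0 v; rewrite -/a -/c !le0r.
by case/predU1P => [-> | c_gt0]; case/predU1P => [-> | a_gt0]; nra.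
Qed.

Section PosDef.
Variable Y : 'M[R]_n.
Hypothesis Y_pd : posdef Y.

Lemma posdef_form_ge0 v : 0 <= mxform Y v v.
Proof.
have [-> | v_neq0] := eqVneq v 0; first by rewrite /mxform mulmx0 mxE.
by apply/ltW; case: Y_pd => _; apply.
Qed.

Lemma posdef_form_eq0 v : mxform Y v v = 0 -> v = 0.
Proof.
move=> fv0; apply/eqP; apply: contraT => v_neq0.
by case: Y_pd => _ /(_ v v_neq0); rewrite -/(mxform Y v v) fv0 ltxx.
Qed.

Lemma posdef_unit : Y \in unitmx.
Proof.
apply: kernel_trivial_unitmx => v Yv0; apply: posdef_form_eq0.
by rewrite /mxform -mulmxA Yv0 mulmx0 mxE.
Qed.

Lemma posdef_coord_bound v i :
  v i 0 ^+ 2 <=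
  mxform Y (invmx Y *m delta_mx i 0) (invmx Y *m delta_mx i 0) * mxform Y v v.
Proof.
have [sY _] := Y_pd.
have -> : v i 0 = mxform Y (invmx Y *m delta_mx i 0) v.
  by rewrite /mxform trmx_mul trmx_inv sY (mulmxKV posdef_unit) trmx_delta -rowE mxE.
exact: (mxform_CauchySchwarz _ _ sY posdef_form_ge0).
Qed.

(* By posdef_coord_bound v_i^2 <= c_i <v, v>, and a nonzero integral v has some
   v_i^2 >= 1. *)
Lemma posdef_int_discrete :
  exists2 eps : R, 0 < eps & forall v : 'cV[int]_n,
    mxform Y (rmx_of_int R v) (rmx_of_int R v) < eps -> v = 0.
Proof.
pose c i := mxform Y (invmx Y *m delta_mx i 0) (invmx Y *m delta_mx i 0).
have c_ge0 i : 0 <= c i by apply: posdef_form_ge0.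
have sum_ge0 : 0 <= \sum_i c i by apply: sumr_ge0.
exists (1 + \sum_i c i)^-1; first by rewrite invr_gt0 ltr_wpDr.
move=> v v_small; apply/matrixP => i j; rewrite (ord1 j) mxE.
have ci_eps : c i * (1 + \sum_i c i)^-1 < 1.
  rewrite ltr_pdivrMr ?ltr_wpDr // mul1r ltr_pwDl //.
  by rewrite (bigD1 i) //= lerDl sumr_ge0.
have := posdef_coord_bound (rmx_of_int R v) i; rewrite mxE -/(c i) => bound.
have : (v i 0 ^+ 2)%:~R < 1 :> R.
  rewrite rmorphXn /=; apply: le_lt_trans bound _; apply: le_lt_trans ci_eps.
  by apply: ler_wpM2l; [apply: c_ge0 | apply: ltW].
by rewrite ltrz1 expr2; nia.
Qed.

End PosDef.
End PositiveForms.

Lemma mxform_conj (R : realType) n p (X : 'M[R]_(p, n)) (Y : 'M[R]_p) (u : 'cV[R]_n) :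
  mxform (X^T *m Y *m X) u u = mxform Y (X *m u) (X *m u).
Proof. by rewrite /mxform trmx_mul !mulmxA. Qed.

Lemma posdef_conj_eq0 (R : realType) n p (Y : 'M[R]_p) (X : 'M[R]_(p, n)) :
  posdef Y -> X^T *m Y *m X = 0 -> X = 0.
Proof.
move=> Y_pd XYX0; apply: mulmx_delta_eq0 => j.
apply: (posdef_form_eq0 Y_pd).
by rewrite -mxform_conj XYX0 /mxform mulmx0 mul0mx mxE.
Qed.

Section Contraction.
Variables (R : realType) (n : nat) (Y K : 'M[R]_n).
Hypotheses (Y_pd : posdef Y) (K_adj : K^T *m Y = Y *m K).

Lemma mxform_adjX j (u v : 'cV[R]_n) : mxform Y (K ^+ j *m u) v = mxform Y u (K ^+ j *m v).
Proof.
elim: j u v => [|j IH] u v; first by rewrite expr0 !mul1mx.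
by rewrite exprSr -mulmxE -mulmxA IH mxform_adj // mulmxA mulmxE -exprS exprSr.
Qed.

Lemma selfadjoint_nilpotent j (w : 'cV[R]_n) : K ^+ j.+1 *m w = 0 -> K *m w = 0.
Proof.
elim: j => [|j IH]; first by rewrite expr1.
move=> Kw0; apply: IH; apply: (posdef_form_eq0 Y_pd).
rewrite mxform_adjX mulmxA mulmxE -exprD addSnnS exprD -mulmxE -mulmxA Kw0.
by rewrite /mxform !mulmx0 mxE.
Qed.

Hypotheses (K_ge0 : forall u : 'cV[R]_n, 0 <= mxform Y u (K *m u))
           (K_le : forall u, 4 * mxform Y u (K *m u) <= mxform Y u u).

(* Cauchy-Schwarz for the semi-definite form Y K, with t = <Kw, Kw>:
   t^2 <= <Kw, K^2 w> <w, Kw> <= (t / 4) (<w, w> / 4). *)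
Lemma contraction_step (w : 'cV[R]_n) : 16 * mxform Y (K *m w) (K *m w) <= mxform Y w w.
Proof.
have [sY _] := Y_pd.
have sYK : (Y *m K)^T = Y *m K by rewrite trmx_mul sY K_adj.
have YK_ge0 u : 0 <= mxform (Y *m K) u u by rewrite -mxformMr.
have := mxform_CauchySchwarz (K *m w) w sYK YK_ge0; rewrite -!mxformMr.
have := K_le (K *m w); have := K_le w; have := K_ge0 w; have := K_ge0 (K *m w).
have := posdef_form_ge0 Y_pd (K *m w); rewrite le0r.
set t := mxform Y (K *m w) (K *m w); case/predU1P => [-> | t_gt0]; nra.
Qed.

Lemma contraction_expn j (w : 'cV[R]_n) :
  16 ^+ j * mxform Y (K ^+ j *m w) (K ^+ j *m w) <= mxform Y w w.
Proof.
elim: j w => [|j IH] w; first by rewrite expr0 mul1r mul1mx.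
have -> : K ^+ j.+1 *m w = K ^+ j *m (K *m w) by rewrite exprSr -mulmxE mulmxA.
by rewrite exprS -mulrA (le_trans _ (contraction_step w)) // ler_pM2l.
Qed.

Lemma contraction_small (eps : R) (w : 'cV[R]_n) : 0 < eps ->
  exists j, mxform Y (K ^+ j.+1 *m w) (K ^+ j.+1 *m w) < eps.
Proof.
move=> eps_gt0; set d := mxform Y w w.
have d_ge0 : 0 <= d / eps by rewrite divr_ge0 ?posdef_form_ge0 ?ltW.
set j := Num.Def.archi_bound (d / eps); exists j.
have j_le : (j%:R : R) <= 16 ^+ j.+1.
  by rewrite -natrX ler_nat ltnW // (ltn_trans (ltnSn j)) // ltn_expl.
have := archi_boundP d_ge0; rewrite -/j ltr_pdivrMr // => d_lt.
have := contraction_expn j.+1 w; have : 0 < (16 : R) ^+ j.+1 by rewrite exprn_gt0.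
rewrite -/d; nra.
Qed.

End Contraction.

Lemma int_contraction_eq0 (R : realType) n (Y : 'M[R]_n) (N : 'M[int]_n) :
  posdef Y -> (rmx_of_int R N)^T *m Y = Y *m rmx_of_int R N ->
  (forall u, 0 <= mxform Y u (rmx_of_int R N *m u)) ->
  (forall u, 4 * mxform Y u (rmx_of_int R N *m u) <= mxform Y u u) -> N = 0.
Proof.
set K := rmx_of_int R N => Y_pd K_adj K_ge0 K_le.
have [eps eps_gt0 discrete] := posdef_int_discrete Y_pd.
have rmxNX j (v : 'cV[int]_n) : rmx_of_int R (N ^+ j *m v) = K ^+ j *m rmx_of_int R v.
  by rewrite map_mxM rmorphXn.
apply: mulmx_delta_eq0 => k; set v := delta_mx k 0.
have [j small] := contraction_small Y_pd K_adj K_ge0 K_le (rmx_of_int R v) eps_gt0.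
have NXv0 : N ^+ j.+1 *m v = 0 by apply: discrete; rewrite rmxNX.
have : K ^+ j.+1 *m rmx_of_int R v = 0 by rewrite -rmxNX NXv0 map_mx0.
move=> /(selfadjoint_nilpotent Y_pd K_adj) Kv0.
by apply: (@rmx_of_int_eq0 R); rewrite (rmxNX 1) Kv0.
Qed.

Lemma int_gram_bounds_eq0 (R : realType) n p (Y : 'M[R]_n) (P : 'M[R]_p)
    (X E : 'M[R]_(p, n)) (N : 'M[int]_n) :
  posdef Y -> posdef P ->
  Y *m (4 *: rmx_of_int R N) = X^T *m P *m X ->
  Y *m (1%:M - 4 *: rmx_of_int R N) = E^T *m P *m E -> N = 0.
Proof.
set K := rmx_of_int R N => Y_pd P_pd F1 F2; have [sY _] := Y_pd; have [sP _] := P_pd.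
apply: (int_contraction_eq0 Y_pd) => [|u|u].
- have sF1 : (Y *m (4 *: K))^T = Y *m (4 *: K) by rewrite F1 trmx_conj_sym.
  apply: (@scalerI _ _ 4); first by rewrite pnatr_eq0.
  by rewrite [RHS]scalemxAr -sF1 trmx_mul sY linearZ /= scalemxAl.
- have : 0 <= 4 * mxform Y u (K *m u).
    by rewrite -mxformZr scalemxAl mxformMr F1 mxform_conj posdef_form_ge0.
  by rewrite pmulr_rge0.
- rewrite -subr_ge0.
  have -> : mxform Y u u - 4 * mxform Y u (K *m u) = mxform Y u ((1%:M - 4 *: K) *m u).
    by rewrite mulmxBl mul1mx -scalemxAl -scaleNr mxformDr mxformZr mulNr.
  by rewrite mxformMr F2 mxform_conj posdef_form_ge0.
Qed.

Lemma cmx_of_intM (R : realType) p q r (A : 'M[int]_(p, q)) (B : 'M[int]_(q, r)) :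
  cmx_of_int R (A *m B) = cmx_of_int R A *m cmx_of_int R B.
Proof. exact: map_mxM. Qed.

Lemma mxbot_cmx (R : realType) n (g : 'M[int]_(n + n)) (Z : 'M[R[i]]_n) :
  mxbot (cmx_of_int R g) Z = cmx_of_int R (dlsubmx g) *m Z + cmx_of_int R (drsubmx g).
Proof. by rewrite /mxbot /cmx_of_int map_dlsubmx map_drsubmx. Qed.

Lemma mxtop_cmx (R : realType) n (g : 'M[int]_(n + n)) (Z : 'M[R[i]]_n) :
  mxtop (cmx_of_int R g) Z = cmx_of_int R (ulsubmx g) *m Z + cmx_of_int R (ursubmx g).
Proof. by rewrite /mxtop /cmx_of_int map_ulsubmx map_ursubmx. Qed.

(* A kernel vector a + ib of C iY + D yields (-Yb, a) and (Ya, b), which g maps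
   into the isotropic subspace {bottom = 0}; their symplectic pairing is
   -(b^T Y b + a^T Y a). *)
Lemma mxbot_imx_unit (R : realType) n (g : 'M[int]_(n + n)) (Y : 'M[R]_n) :
  symplectic g -> posdef Y -> mxbot (cmx_of_int R g) (imx Y) \in unitmx.
Proof.
move=> sg Y_pd; have [sY _] := Y_pd.
apply: kernel_trivial_unitmx => v; rewrite mxbot_cmx => v0.
have := congr1 (@mxRe R _ _) v0; rewrite mxRe_mul mxRe_affine mxIm_affine mxRe0 => eRe.
have := congr1 (@mxIm R _ _) v0; rewrite mxIm_mul mxRe_affine mxIm_affine mxIm0 => eIm.
set a := mxRe v in eRe eIm *; set b := mxIm v in eRe eIm *.
have sG : symplectic (rmx_of_int R g) by apply: symplectic_map.
have := symplectic_isotropic (x := col_mx (- (Y *m b)) a) (y := col_mx (Y *m a) b) sG.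
rewrite !dsubmx_mul_col -!map_dlsubmx -!map_drsubmx mulmxN !mulmxA addrC eRe.
rewrite addrC eIm Jmx_form => /(_ erefl erefl).
rewrite linearN /= mulNmx trmx_mul sY !mulmxA -opprD => /eqP; rewrite oppr_eq0.
move=> /eqP /matrixP /(_ 0 0); rewrite [LHS]mxE [RHS]mxE -/(mxform Y a a) -/(mxform Y b b).
have := posdef_form_ge0 Y_pd a; have := posdef_form_ge0 Y_pd b => fb fa eab.
have a0 : a = 0 by apply: (posdef_form_eq0 Y_pd); lra.
have b0 : b = 0 by apply: (posdef_form_eq0 Y_pd); lra.
by apply: mxReIm_inj; rewrite ?mxRe0 ?mxIm0.
Qed.

Lemma mxtop_imx_eq (R : realType) n (h : 'M[int]_(n + n)) (Y1 Y2 : 'M[R]_n) :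
  mxtop (cmx_of_int R h) (imx Y1) = imx Y2 *m mxbot (cmx_of_int R h) (imx Y1) ->
  rmx_of_int R (ursubmx h) = - (Y2 *m (rmx_of_int R (dlsubmx h) *m Y1)) /\
  rmx_of_int R (ulsubmx h) *m Y1 = Y2 *m rmx_of_int R (drsubmx h).
Proof.
rewrite mxtop_cmx mxbot_cmx => e; split.
  by have := congr1 (@mxRe R _ _) e; rewrite mxRe_imx_mul !mxRe_affine mxIm_affine.
by have := congr1 (@mxIm R _ _) e; rewrite mxIm_imx_mul !mxIm_affine mxRe_affine.
Qed.

Lemma sp_blocks_eq0 (R : realType) n (A B C D : 'M[int]_n) (Y1 Y2 : 'M[R]_n) :
  posdef Y1 -> posdef Y2 -> A^T *m D - C^T *m B = 1%:M ->
  mxcong 2 B 0 -> mxcong 2 C 0 ->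
  rmx_of_int R B = - (Y2 *m (rmx_of_int R C *m Y1)) ->
  rmx_of_int R A *m Y1 = Y2 *m rmx_of_int R D ->
  C = 0 /\ B = 0.
Proof.
move=> Y1_pd Y2_pd sympl /mxcong0_scale[B' eB] /mxcong0_scale[C' eC] eRe eIm.
have [sY1 _] := Y1_pd; have [sY2 _] := Y2_pd.
pose N := - (C'^T *m B'); set K := rmx_of_int R N; set X := rmx_of_int R C *m Y1.
have CB : rmx_of_int R (C^T *m B) = - (4 *: K).
  have -> : C^T *m B = 4 *: (C'^T *m B') by rewrite eB eC !linearZ /= -scalemxAl scalerA.
  by rewrite /K map_mxN scalerN opprK; apply/matrixP => i j; rewrite !mxE intrM.
have F1 : Y1 *m (4 *: K) = X^T *m Y2 *m X.
  by rewrite -[4 *: K]opprK -CB map_mxM -map_trmx eRe !mulmxN opprK /X trmx_mul sY1 !mulmxA.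
have F2 : Y1 *m (1%:M - 4 *: K) = (rmx_of_int R D)^T *m Y2 *m rmx_of_int R D.
  have -> : 1%:M - 4 *: K = rmx_of_int R (A^T *m D).
    by rewrite -[A^T *m D](subrK (C^T *m B)) sympl map_mxD map_mx1 CB.
  by rewrite map_mxM -map_trmx mulmxA -{1}sY1 -trmx_mul eIm trmx_mul sY2.
have N0 : N = 0 := int_gram_bounds_eq0 Y1_pd Y2_pd F1 F2.
have X0 : X = 0.
  by apply: (posdef_conj_eq0 Y2_pd); rewrite -F1 /K N0 map_mx0 scaler0 mulmx0.
have C0 : C = 0.
  apply: (@rmx_of_int_eq0 R).
  by rewrite -[rmx_of_int R C](mulmxK (posdef_unit Y1_pd)) -/X X0 mul0mx.
by split=> //; apply: (@rmx_of_int_eq0 R); rewrite eRe -/X X0 mulmx0 oppr0.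
Qed.

Lemma block_diag_embedGL n (h : 'M[int]_(n + n)) :
  symplectic h -> mxcong 2 (drsubmx h) 1%:M -> ursubmx h = 0 -> dlsubmx h = 0 ->
  exists2 alpha, Gamma_l_2 alpha & h *m embedGL alpha = 1%:M.
Proof.
move=> sh D1 B0 C0; have := symplectic_blocks sh; rewrite B0 C0 mulmx0 subr0.
set A := ulsubmx h; set D := drsubmx h => AD1.
have DA1 : D *m A^T = 1%:M := mulmx1C AD1.
have [_ D_unit] := mulmx1_unit AD1.
exists D^T.
  split; first by rewrite unitmx_tr.
  move/mxcong2P: D1 => D1.
  by apply/mxcong2P; rewrite -map_trmx D1 map_mx1 trmx1.
have invD : invmx D = A^T.
  by rewrite -[A^T]mul1mx -(mulVmx D_unit) -mulmxA DA1 mulmx1.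
have AD1' : A *m D^T = 1%:M by rewrite -[A]trmxK -trmx_mul DA1 trmx1.
rewrite /embedGL trmxK invD -[h]submxK B0 C0 -/A -/D mulmx_block.
by rewrite !mulmx0 !mul0mx !addr0 !add0r DA1 AD1' -scalar_mx_block.
Qed.

Unset Implicit Arguments.

Theorem lemma4p10 (R : realType) (n m : nat) (g1 g2 : 'M[int]_(n + n)) :
  (1 <= m)%N -> Gamma_2m_2 m g1 -> Gamma_2m_2 m g2 ->
  forall (Z1 Z2 : 'M[R[i]]_n) (gamma : 'M[int]_(n + n)),
    in_orbit_iC g1 Z1 -> in_orbit_iC g2 Z2 -> Gamma_princ m gamma ->
    sp_act gamma Z1 = Z2 ->
  exists alpha : 'M[int]_n,
    Gamma_l_2 alpha /\ g2 = gamma *m g1 *m embedGL alpha.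
Proof.
move=> _ g1_G g2_G Z1 Z2 ga [Y1 [Y1_pd ->]] [Y2 [Y2_pd ->]] ga_G act_eq.
have [s1 _ _ _ _] := g1_G; have [s2 _ _ _ _] := g2_G; have [sga _] := ga_G.
pose h := sp_inv g2 *m (ga *m g1).
have sh : symplectic h := symplecticM (symplectic_sp_inv s2) (symplecticM sga s1).
have h_top : mxtop (cmx_of_int R h) (imx Y1) = imx Y2 *m mxbot (cmx_of_int R h) (imx Y1).
  rewrite /h !cmx_of_intM; apply: mxact_transport act_eq.
  - by rewrite -cmx_of_intM sp_invK // /cmx_of_int map_mx1.
  - exact: mxbot_imx_unit.
  - by rewrite -cmx_of_intM; apply: mxbot_imx_unit => //; apply: symplecticM.
  - exact: mxbot_imx_unit.
have inv_mod2 : mx_Fp 2 (sp_inv g2) = 1%:M.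
  by rewrite -[LHS]mulmx1 -{1}(Gamma_2m_2_mod2 g2_G) -map_mxM sp_invK // map_mx1.
have h_mod2 : mx_Fp 2 h = 1%:M.
  by rewrite /h !map_mxM inv_mod2 (Gamma_princ_mod2 ga_G) (Gamma_2m_2_mod2 g1_G) !mulmx1.
have [B2 C2 D2] := mod2_blocks h_mod2.
have [eB eA] := mxtop_imx_eq h_top.
have [C0 B0] := sp_blocks_eq0 Y1_pd Y2_pd (symplectic_blocks sh) B2 C2 eB eA.
have [alpha alpha_G h_alpha] := block_diag_embedGL sh D2 B0 C0.
exists alpha; split=> //.
by rewrite -[g2]mulmx1 -h_alpha /h !mulmxA (sp_invKV s2) mul1mx.
Qed.
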